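(* Let $\mathcal Z\subseteq[0,1]^d$ and suppose $y_1(\mathbf{x})=y_2(\mathbf{x})$ for all $\mathbf{x}\notin\mathcal Z$. Then for any admissible algorithm with budget $n$, $\mathbb{P}_2(\tau(\mathcal Z)>t)=\mathbb{P}_1(\tau(\mathcal Z)>t)$ for all $t$, where $\mathbb{P}_i$ denotes probability when the algorithm is run on Problem $i$.
   Context: Problem $i$ ($i=1,2$): objective $y_i:[0,1]^d\to\mathbb{R}$; a query at $\mathbf{x}$ returns $Y(\mathbf{x})=y_i(\mathbf{x})+\varepsilon(\mathbf{x})$ with $\varepsilon(\mathbf{x})\sim N(0,\sigma^2)$, $\sigma^2\ge0$, independent of everything else. Admissible algorithm with budget $n$: (i) $\mathbf{x}_1$ deterministic or a measurable function of a random vector $U_1$; (ii) for $t=1,\dots,n-1$, $\mathbf{x}_{t+1}$ a measurable function of $\mathbf{x}_1,Y(\mathbf{x}_1),\dots,\mathbf{x}_t,Y(\mathbf{x}_t)$ and a random vector $U_{t+1}$; (iii) output $\hat{\mathbf{x}}_n^*$ a measurable function of the full history and a random vector $U_n^*$; (iv) $\hat{\mathbf{x}}_n^*\in\{\mathbf{x}_1,\dots,\mathbf{x}_n\}$; the $U$'s are independent random vectors independent of the noise. First hitting time: $\tau(\mathcal Z)=\min\{t\in\{1,\dots,n\}:\mathbf{x}_t\in\mathcal Z\}$ if some $\mathbf{x}_t\in\mathcal Z$, and $\tau(\mathcal Z)=n+1$ otherwise. *)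

From HB Require Import structures.
From mathcomp Require Import all_boot all_order all_algebra.
From mathcomp Require Import finmap.
From mathcomp Require Import all_classical all_reals.
From mathcomp Require Import ereal topology normedtype sequences measure
  lebesgue_measure lebesgue_integral probability.
From mathcomp Require Import normal_distribution.

Set Implicit Arguments.
Unset Strict Implicit.
Unset Printing Implicit Defensive.

Import Order.TTheory GRing.Theory Num.Theory.
Local Open Scope classical_set_scope.
Local Open Scope ring_scope.

Notation Rpoint R d := (d.-tuple R).

Definition cube {R : realType} (d : nat) : set (Rpoint R d) :=
  [set x | forall i : 'I_d, 0 <= tnth x i <= 1].

(* Law of the noise: N(0, sigma^2), sigma >= 0 the standard deviation;
   the degenerate case sigma = 0 is the Dirac mass at 0. *)
Definition noise_law {R : realType} (sigma : R) : set R -> \bar R :=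
  if sigma == 0 then \d_(0 : R) else normal_prob 0 sigma.

Definition mutually_independent {R : realType} {d0 : measure_display}
  {Om : measurableType d0} (P : probability Om R) {I : choiceType}
  (D : set I) (F : I -> set (set Om)) : Prop :=
  forall J : {fset I}, [set` J] `<=` D ->
  forall A : I -> set Om, (forall i, i \in J -> F i (A i)) ->
  P (\bigcap_(i in [set` J]) A i) = (\prod_(i <- J) P (A i))%E.

Definition gen_sigma {d0 d1 : measure_display} {Om : measurableType d0}
  {T : measurableType d1} (X : Om -> T) : set (set Om) :=
  [set A | exists2 B, measurable B & A = X @^-1` B].

(* Index set of the randomness of an algorithm with budget n:
   inl (Some t) = U_{t+1} (t < n), inl None = U_n^*, inr t = eps_{t+1} (t < n). *)
Definition rand_index := (option nat + nat)%type.

Definition rand_domain (n : nat) : set rand_index :=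
  fun i => match i with
           | inl (Some t) => (t < n)%N
           | inl None => True
           | inr t => (t < n)%N
           end.

Section Run.
Context {R : realType} {d0 : measure_display} {Om : measurableType d0}.
Variables (d : nat) (k : nat -> nat).
(* step t : history of the first t queries (x_1,Y_1,...,x_t,Y_t) and U_{t+1}
   |-> x_{t+1}   (0-based: step t produces the (t+1)-th query). *)
Variable step : forall t : nat, t.-tuple (Rpoint R d * R) -> (k t).-tuple R -> Rpoint R d.
Variable U : forall t : nat, Om -> (k t).-tuple R.
Variable eps : nat -> Om -> R.
Variable y : Rpoint R d -> R.

Fixpoint history (t : nat) : Om -> t.-tuple (Rpoint R d * R) :=
  match t with
  | 0 => fun _ => [tuple]
  | t'.+1 => fun w =>
      let h := history t' w in
      let x := step h (U t' w) in
      rcons_tuple h (x, y x + eps t' w)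
  end.

Definition queries (n : nat) (w : Om) : seq (Rpoint R d) :=
  map fst (history n w).

(* first hitting time tau(Z): least t in {1..n} with x_t in Z, n+1 if none *)
Definition hitting_time (n : nat) (Z : set (Rpoint R d)) (w : Om) : nat :=
  (find (fun x => x \in Z) (queries n w)).+1.
End Run.
Arguments cube {R} d _.

From HB Require Import structures.
From mathcomp Require Import all_boot all_order all_algebra.
From mathcomp Require Import finmap.
From mathcomp Require Import all_classical all_reals.
From mathcomp Require Import ereal topology normedtype sequences measure
  lebesgue_measure lebesgue_integral probability.
From mathcomp Require Import normal_distribution.
Import Order.TTheory GRing.Theory Num.Theory.
Local Open Scope classical_set_scope.
Local Open Scope ring_scope.

(* Coupling: run the algorithm on both problems with the same randomness
   (U_t, eps_t).  As long as no query has entered Z, the observed values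
   y_1(x_t) + eps_t and y_2(x_t) + eps_t coincide, so both runs make the same
   next query.  Hence the two runs agree up to and including the first query
   in Z, and tau(Z) is the same random variable on both problems; in
   particular its laws agree, whatever the noise law and dependence
   structure of the randomness. *)

Lemma find_eq_take_find (T : Type) (a : pred T) (s1 s2 : seq T) :
  size s1 = size s2 ->
  take (find a s1).+1 s1 = take (find a s1).+1 s2 ->
  find a s2 = find a s1.
Proof.
move=> eq_size eq_take; case: (ltnP (find a s1) (size s1)) => [hit | miss].
  have has_prefix : has a (take (find a s1).+1 s1) by rewrite has_take_leq.
  rewrite -(cat_take_drop (find a s1).+1 s1) -(cat_take_drop (find a s1).+1 s2).
  by rewrite !find_cat -eq_take has_prefix.
have s1_miss : (size s1 <= (find a s1).+1)%N by rewrite leqW.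
have s2_miss : (size s2 <= (find a s1).+1)%N by rewrite -eq_size.
by move: eq_take; rewrite !take_oversize // => ->.
Qed.

Section Run.
Context {R : realType} {d0 : measure_display} {Om : measurableType d0}.
Variables (d : nat) (k : nat -> nat).
Variable step : forall t : nat, t.-tuple (Rpoint R d * R) -> (k t).-tuple R -> Rpoint R d.
Variable U : forall t : nat, Om -> (k t).-tuple R.
Variable eps : nat -> Om -> R.

Lemma history_take (y : Rpoint R d -> R) m n w : (m <= n)%N ->
  take m (history step U eps y n w) = history step U eps y m w.
Proof.
move=> /subnKC <-; elim: (n - m)%N => [|j IH].
  by rewrite addn0 take_oversize // size_tuple.
by rewrite addnS /= -cats1 takel_cat ?size_tuple ?leq_addr.
Qed.

Lemma queries_take (y : Rpoint R d -> R) m n w : (m <= n)%N ->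
  take m (queries step U eps y n w) = queries step U eps y m w.
Proof. by move=> le_mn; rewrite /queries -map_take history_take. Qed.

Lemma queriesS (y : Rpoint R d -> R) m w :
  queries step U eps y m.+1 w =
  rcons (queries step U eps y m w) (step m (history step U eps y m w) (U m w)).
Proof. by rewrite /queries /= map_rcons. Qed.

Lemma size_queries (y : Rpoint R d -> R) m w : size (queries step U eps y m w) = m.
Proof. by rewrite /queries size_map size_tuple. Qed.

Section Coupling.
Variables (y1 y2 : Rpoint R d -> R) (Z : set (Rpoint R d)) (n : nat) (w : Om).
Hypothesis agree_outside : forall t h u, (t < n)%N ->
  ~ Z (step t h u) -> y1 (step t h u) = y2 (step t h u).

Let first_hit := find (fun x => x \in Z) (queries step U eps y1 n w).

Lemma history_agree_before_hit m : (m <= n)%N -> (m <= first_hit)%N ->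
  history step U eps y1 m w = history step U eps y2 m w.
Proof.
elim: m => [|m IH] lt_mn lt_m_hit; first exact/val_inj.
have eq_hist := IH (ltnW lt_mn) (ltnW lt_m_hit).
set x := step m (history step U eps y1 m w) (U m w).
have nth_x : nth x (queries step U eps y1 n w) m = x.
  by rewrite -(nth_take x (ltnSn m)) queries_take // queriesS nth_rcons
    size_queries ltnn eqxx.
have x_notin_Z : ~ Z x.
  by move=> /mem_set x_in_Z; have := before_find x lt_m_hit; rewrite nth_x x_in_Z.
by apply/val_inj; rewrite /= -/x -eq_hist -/x agree_outside.
Qed.

Lemma queries_agree_until_hit :
  take first_hit.+1 (queries step U eps y1 n w) =
  take first_hit.+1 (queries step U eps y2 n w).
Proof.
case: (ltnP first_hit n) => [hit | miss].
  rewrite !queries_take // !queriesS /queries.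
  by rewrite history_agree_before_hit ?(ltnW hit).
by rewrite /queries history_agree_before_hit.
Qed.

Lemma hitting_time_coupled :
  hitting_time step U eps y2 n Z w = hitting_time step U eps y1 n Z w.
Proof.
rewrite /hitting_time (@find_eq_take_find _ _ (queries step U eps y1 n w)) //.
  by rewrite !size_queries.
exact: queries_agree_until_hit.
Qed.

End Coupling.
End Run.

Theorem lemma2 (R : realType) (d0 : measure_display) (Om : measurableType d0)
  (P : probability Om R)
  (d n : nat) (sigma : R) (y1 y2 : Rpoint R d -> R)
  (Z : set (Rpoint R d))
  (* randomness: U_{t+1} = U t, U_n^* = Ustar, eps_{t+1} = eps t *)
  (k : nat -> nat) (U : forall t : nat, Om -> (k t).-tuple R)
  (kstar : nat) (Ustar : Om -> kstar.-tuple R) (eps : nat -> Om -> R)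
  (* the algorithm: query maps and output map *)
  (step : forall t : nat, t.-tuple (Rpoint R d * R) -> (k t).-tuple R -> Rpoint R d)
  (output : n.-tuple (Rpoint R d * R) -> kstar.-tuple R -> Rpoint R d) :
  (* noise model *)
  0 <= sigma ->
  (forall t, (t < n)%N -> measurable_fun setT (eps t)) ->
  (forall t, (t < n)%N -> forall B : set R, measurable B ->
     P (eps t @^-1` B) = noise_law sigma B) ->
  (* random vectors *)
  (forall t, (t < n)%N -> measurable_fun setT (U t)) ->
  measurable_fun setT Ustar ->
  (* the U's and the noise variables are mutually independent *)
  mutually_independent P (rand_domain n)
    (fun i => match i with
              | inl (Some t) => gen_sigma (U t)
              | inl None => gen_sigma Ustar
              | inr t => gen_sigma (eps t)
              end) ->
  (* admissibility: measurable query maps with values in [0,1]^d *)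
  (forall t, (t < n)%N ->
     measurable_fun setT
       (fun p : t.-tuple (Rpoint R d * R) * (k t).-tuple R => step t p.1 p.2)) ->
  (forall t h u, (t < n)%N -> cube d (step t h u)) ->
  (* admissibility: measurable output map, output is one of the queries *)
  measurable_fun setT
    (fun p : n.-tuple (Rpoint R d * R) * kstar.-tuple R => output p.1 p.2) ->
  (forall w, output (history step U eps y1 n w) (Ustar w)
               \in queries step U eps y1 n w) ->
  (forall w, output (history step U eps y2 n w) (Ustar w)
               \in queries step U eps y2 n w) ->
  (* the two problems agree outside Z *)
  Z `<=` cube d ->
  (forall x, cube d x -> ~ Z x -> y1 x = y2 x) ->
  forall t : int,
    P [set w | t < (hitting_time step U eps y2 n Z w)%:Z]
    = P [set w | t < (hitting_time step U eps y1 n Z w)%:Z].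
Proof.
move=> _ _ _ _ _ _ _ step_in_cube _ _ _ _ y12_outside t.
congr (P _); apply/funext => w /=.
rewrite (@hitting_time_coupled _ _ _ _ _ step U eps y1) // => t' h u lt_t'n.
exact/y12_outside/step_in_cube.
Qed.
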